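(* Consider (CVOP) and its associated convex projection (Pv) with feasible set $S_a$ and $Y_a=\operatorname{proj}_y[S_a]$. (1) If $\bar S\subseteq S_a$ is a solution of (Pv), then $\bar X:=\operatorname{proj}_x[\bar S]$ is an infimizer of (CVOP). (2) If (Pv) is self-bounded, then (CVOP) is self-bounded. If, additionally, $(\operatorname{cl}Y_a)_\infty=\operatorname{cl}C$, then (CVOP) is bounded. (3) Let (Pv) be self-bounded and let $\bar S\subseteq S_a$ be a finite $\epsilon$-solution of (Pv). Then $\bar X:=\operatorname{proj}_x[\bar S]$ is a finite $\tilde\epsilon$-infimizer of (CVOP) for every $\tilde\epsilon>\epsilon/\delta_c$, where $\delta_c:=\sup\{\delta>0: c+B_\delta\subseteq C\}$.
   Context: (CVOP): $\min\Gamma(x)$ w.r.t. $\le_C$ s.t. $x\in\mathcal{X}$, with $C\subseteq\mathbb{R}^m$ a non-trivial pointed solid convex cone, $\mathcal{X}\subseteq\mathbb{R}^n$ convex, $\Gamma$ $C$-convex; upper image $\mathcal{G}=\operatorname{cl}(\Gamma[\mathcal{X}]+C)$. $S_a=\{(x,y):x\in\mathcal{X},y\in\Gamma(x)+C\}$, $\operatorname{proj}_x(x,y)=x$, $\operatorname{proj}_y(x,y)=y$. Recession cone $A_\infty=\{y:x+\lambda y\in A\ \forall x\in A,\lambda\ge0\}$. Fix a $p$-norm with closed balls $B_\epsilon$, a direction $c\in\operatorname{int}C$ with $\|c\|=1$ and $\epsilon>0$. (CVOP) is bounded if $\mathcal{G}\subseteq\{q\}+C$ for some $q$; self-bounded if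 $\mathcal{G}\ne\mathbb{R}^m$ and $\mathcal{G}\subseteq\{q\}+\mathcal{G}_\infty$ for some $q$. $\bar X\subseteq\mathcal{X}$ is an infimizer if $\mathcal{G}=\operatorname{cl}\operatorname{conv}(\Gamma[\bar X]+C)$. A nonempty finite $\bar X$ is a finite $\epsilon$-infimizer if $\mathcal{G}\subseteq\operatorname{conv}\Gamma[\bar X]+C-\epsilon\{c\}$ (bounded case), resp. $\mathcal{G}\subseteq\operatorname{conv}\Gamma[\bar X]+\mathcal{G}_\infty-\epsilon\{c\}$ (self-bounded case). For (Pv): $\bar S\subseteq S_a$ is a solution if $Y_a\subseteq\operatorname{cl}\operatorname{conv}\operatorname{proj}_y[\bar S]$; (Pv) is self-bounded if $Y_a\ne\mathbb{R}^m$ and $Y_a\subseteq\operatorname{conv}\{y^{(1)},\dots,y^{(k)}\}+(\operatorname{cl}Y_a)_\infty$ for finitely many points; a nonempty finite $\bar S\subseteq S_a$ is a finite $\epsilon$-solution of self-bounded (Pv) if $Y_a\subseteq\operatorname{conv}\operatorname{proj}_y[\bar S]+(\operatorname{cl}Y_a)_\infty+B_\epsilon$. *)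

From mathcomp Require Import all_boot all_order all_algebra.
From mathcomp Require Import all_classical all_reals all_analysis.
Import numFieldNormedType.Exports.
Set Implicit Arguments. Unset Strict Implicit. Unset Printing Implicit Defensive.
Import Order.TTheory GRing.Theory Num.Theory.
Local Open Scope classical_set_scope.
Local Open Scope ring_scope.

Section CVOP.
Variable R : realType.

Definition pnorm (k : nat) (p : \bar R) (x : 'rV[R]_k) : R :=
  match p with
  | +oo%E => \big[Num.max/0]_(i < k) `|x ord0 i|
  | (r%:E)%E => powR (\sum_(i < k) powR `|x ord0 i| r) r^-1
  | -oo%E => 0
  end.

Definition Bball (k : nat) (p : \bar R) (e : R) : set 'rV[R]_k :=
  [set y | pnorm p y <= e].

Definition msum (k : nat) (A B : set 'rV[R]_k) : set 'rV[R]_k :=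
  [set a + b | a in A & b in B].

Definition conv (k : nat) (A : set 'rV[R]_k) : set 'rV[R]_k :=
  [set y | exists (N : nat) (w : 'I_N -> R) (a : 'I_N -> 'rV[R]_k),
     [/\ (forall i, 0 <= w i), \sum_(i < N) w i = 1, (forall i, A (a i)) &
         y = \sum_(i < N) w i *: a i]].

Definition recc (k : nat) (A : set 'rV[R]_k) : set 'rV[R]_k :=
  [set y | forall x, A x -> forall l : R, 0 <= l -> A (x + l *: y)].

Definition is_convex_set (k : nat) (A : set 'rV[R]_k) : Prop :=
  forall x y, A x -> A y -> forall t : R, 0 <= t <= 1 -> A (t *: x + (1 - t) *: y).

Definition is_cone (k : nat) (C : set 'rV[R]_k) : Prop :=
  forall y, C y -> forall l : R, 0 <= l -> C (l *: y).

(* non-trivial pointed solid convex cone *)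
Definition ntps_convex_cone (k : nat) (C : set 'rV[R]_k) : Prop :=
  [/\ is_cone C, is_convex_set C,
      C != [set 0] /\ C != setT,
      (forall y, C y -> C (- y) -> y = 0)
    & interior C !=set0].

Definition C_convex (n m : nat) (C : set 'rV[R]_m) (X : set 'rV[R]_n)
  (Gam : 'rV[R]_n -> 'rV[R]_m) : Prop :=
  forall x y, X x -> X y -> forall t : R, 0 <= t <= 1 ->
    C (t *: Gam x + (1 - t) *: Gam y - Gam (t *: x + (1 - t) *: y)).

Section Problem.
Variables (n m : nat) (C : set 'rV[R]_m) (X : set 'rV[R]_n)
  (Gam : 'rV[R]_n -> 'rV[R]_m).

Definition upper_image : set 'rV[R]_m := closure (msum (Gam @` X) C).

Definition cvop_bounded : Prop :=
  exists q, upper_image `<=` msum [set q] C.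

Definition cvop_self_bounded : Prop :=
  upper_image != setT /\ exists q, upper_image `<=` msum [set q] (recc upper_image).

Definition infimizer (Xb : set 'rV[R]_n) : Prop :=
  Xb `<=` X /\ upper_image = closure (conv (msum (Gam @` Xb) C)).

(* finite eps-infimizer, self-bounded case *)
Definition finite_eps_infimizer (c : 'rV[R]_m) (eps : R) (Xb : set 'rV[R]_n) : Prop :=
  [/\ Xb `<=` X, Xb !=set0, finite_set Xb &
      upper_image `<=`
        msum (msum (conv (Gam @` Xb)) (recc upper_image)) [set - (eps *: c)]].

Definition Sa : set ('rV[R]_n * 'rV[R]_m) :=
  [set xy | X xy.1 /\ msum [set Gam xy.1] C xy.2].

Definition Ya : set 'rV[R]_m := snd @` Sa.

Definition pv_solution (Sb : set ('rV[R]_n * 'rV[R]_m)) : Prop :=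
  Sb `<=` Sa /\ Ya `<=` closure (conv (snd @` Sb)).

Definition pv_self_bounded : Prop :=
  Ya != setT /\
  exists P : set 'rV[R]_m, finite_set P /\ Ya `<=` msum (conv P) (recc (closure Ya)).

Definition pv_finite_eps_solution (p : \bar R) (eps : R)
  (Sb : set ('rV[R]_n * 'rV[R]_m)) : Prop :=
  [/\ Sb `<=` Sa, Sb !=set0, finite_set Sb &
      Ya `<=` msum (msum (conv (snd @` Sb)) (recc (closure Ya))) (Bball p eps)].

End Problem.

Definition delta_c (m : nat) (p : \bar R) (C : set 'rV[R]_m) (c : 'rV[R]_m) : R :=
  sup [set d : R | 0 < d /\ msum [set c] (Bball p d) `<=` C].

End CVOP.

From Pilot Require Import Defs.
From mathcomp Require Import all_boot all_order all_algebra.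
From mathcomp Require Import all_classical all_reals all_analysis.
From mathcomp Require Import ring lra.
Set Implicit Arguments. Unset Strict Implicit. Unset Printing Implicit Defensive.
Import numFieldNormedType.Exports.
Import Order.TTheory GRing.Theory Num.Theory.
Local Open Scope classical_set_scope.
Local Open Scope ring_scope.

(* Everything rests on the identity Y_a = Gamma[X] + C, so that the
   upper image is G = cl Y_a, and on three facts from convex geometry:
   - C-convexity of Gamma makes Y_a convex, and C is contained in recc G;
   - a convex set that is dense in R^m is all of R^m (induction on the number
     of coordinates already matched, using convex combinations of points on
     both sides), so Y_a <> R^m forces G <> R^m;
   - an interior point c of C absorbs small perturbations: c + cl C <= C, the
     hull of a finite set lies in q + C, and a p-small and a norm-small vector
     are swallowed by a positive multiple of c (delta_c measures how much). *)

Lemma closure_map (T U : topologicalType) (f : T -> U) (A : set T) (B : set U) :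
  continuous f -> f @` A `<=` B -> forall x, closure A x -> closure B (f x).
Proof.
move=> cf fAB x clx N Nfx.
have /clx [a [Aa Na]] : nbhs x (f @^-1` N) by exact: cf.
by exists (f a); split => //; apply: fAB; exists a.
Qed.

Lemma closure_closure (T : topologicalType) (A : set T) :
  closure (closure A) = closure A.
Proof. by rewrite -(closure_id _).1 //; exact: closed_closure. Qed.

Section ConesAndHulls.
Variables (R : realType) (k : nat).
Implicit Types (A B C : set 'rV[R]_k) (x y z : 'rV[R]_k).

Lemma affine_continuous (a : R) (b : 'rV[R]_k) : continuous (fun z => a *: z + b).
Proof.
move=> z; apply: continuousD; last exact: cst_continuous.
by apply: continuousZ; [exact: cst_continuous | exact: cvg_id].
Qed.

Lemma cone0 C : is_cone C -> C !=set0 -> C 0.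
Proof. by move=> hc [c Cc]; have := hc c Cc 0 (lexx _); rewrite scale0r. Qed.

(* A convex cone is closed under addition (x + y = 2 ((x + y) / 2)). *)
Lemma cone_add C : is_cone C -> is_convex_set C -> forall x y, C x -> C y -> C (x + y).
Proof.
move=> hc hv x y Cx Cy.
have h : 0 <= (2^-1 : R) <= 1 by apply/andP; split; lra.
have := hc _ (hv x y Cx Cy _ h) 2 ltac:(lra).
by congr C; apply/rowP => j; rewrite !mxE; field.
Qed.

Lemma cone_sum C : is_cone C -> is_convex_set C -> C !=set0 ->
  forall N (w : 'I_N -> R) (a : 'I_N -> 'rV[R]_k),
  (forall i, 0 <= w i) -> (forall i, C (a i)) -> C (\sum_(i < N) w i *: a i).
Proof.
move=> hc hv hn N w a w0 Ca.
elim/big_ind: _ => //; [exact: cone0 | exact: cone_add | by move=> i _; apply: hc].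
Qed.

Lemma conv_mono A B : A `<=` B -> Defs.conv A `<=` Defs.conv B.
Proof.
by move=> AB y [N [w [a [w0 w1 Aa ->]]]]; exists N, w, a; split => // i; apply: AB.
Qed.

(* A convex set contains all finite convex combinations of its points:
   split off the last point and renormalise the remaining weights. *)
Lemma conv_sub_convex A : is_convex_set A -> Defs.conv A `<=` A.
Proof.
move=> hA y [N [w [a [w0 w1 Aa ->]]]].
elim: N w a w0 w1 Aa => [|N IH] w a w0 w1 Aa.
  by move: w1; rewrite big_ord0 => /eqP; rewrite eq_sym oner_eq0.
rewrite big_ord_recr /=; rewrite big_ord_recr /= in w1.
set s := \sum_(i < N) w (widen_ord (leqnSn N) i) in w1 *.
have s0 : 0 <= s by apply: sumr_ge0 => i _.
have wN : w ord_max = 1 - s by rewrite -w1; ring.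
have [s_eq0|s_neq0] := eqVneq s 0.
  have z i : w (widen_ord (leqnSn N) i) = 0.
    exact: (psumr_eq0P (P := xpredT) (F := fun i => w (widen_ord (leqnSn N) i))).
  rewrite big1 => [|i _]; last by rewrite z scale0r.
  by rewrite add0r wN s_eq0 subr0 scale1r.
have sp : 0 < s by rewrite lt_def s_neq0.
pose w' i := w (widen_ord (leqnSn N) i) / s.
have Az : A (\sum_(i < N) w' i *: a (widen_ord (leqnSn N) i)).
  by apply: IH => [i||i]; rewrite /w' ?divr_ge0 // -mulr_suml mulfV.
have s1 : 0 <= s <= 1 by rewrite s0 /= -w1 lerDl.
have := hA _ _ Az (Aa ord_max) s s1.
congr A; rewrite wN; congr (_ + _); rewrite scaler_sumr; apply: eq_bigr => i _.
by rewrite scalerA /w' mulrC mulfVK.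
Qed.

Lemma conv_msum_cone A C : is_cone C -> is_convex_set C -> C !=set0 ->
  Defs.conv (Defs.msum A C) `<=` Defs.msum (Defs.conv A) C.
Proof.
move=> hc hv hn _ [N [w [a [w0 w1 Ha ->]]]].
have /choice [f hf] : forall i, exists uv : 'rV[R]_k * 'rV[R]_k,
    [/\ A uv.1, C uv.2 & uv.1 + uv.2 = a i].
  by move=> i; have [u Au [v Cv <-]] := Ha i; exists (u, v).
exists (\sum_(i < N) w i *: (f i).1).
  by exists N, w, (fun i => (f i).1); split => // i; case: (hf i).
exists (\sum_(i < N) w i *: (f i).2); first by apply: cone_sum => // i; case: (hf i).
rewrite -big_split /=; apply: eq_bigr => i _.
by rewrite -scalerDr; case: (hf i) => _ _ ->.
Qed.

Lemma recc_add A x y : recc A x -> recc A y -> recc A (x + y).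
Proof. by move=> hx hy z Az l l0; rewrite scalerDr addrA; apply: hy => //; apply: hx. Qed.

Lemma recc_closed A : closed A -> closure (recc A) `<=` recc A.
Proof.
move=> cA y cly x Ax l l0; rewrite addrC (closure_id A).1 //.
have shift : (fun z => l *: z + x) @` recc A `<=` A.
  by move=> _ [z rz <-]; rewrite addrC; apply: rz.
exact: (closure_map (affine_continuous (a := l) (b := x)) shift).
Qed.

End ConesAndHulls.

Section DenseConvex.
Variables (R : realType) (m : nat) (A : set 'rV[R]_m) (z : 'rV[R]_m).
Hypotheses (A_convex : is_convex_set A) (A_dense : forall y, closure A y).

Lemma entry_le_norm (x : 'rV[R]_m) j : `|x ord0 j| <= `|x|.
Proof.
rewrite (_ : `|x| = mx_norm x) // mx_normrE.
exact: (le_bigmax _ (fun ij : 'I_1 * 'I_m => `|x ij.1 ij.2|) (ord0, j)).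
Qed.

Definition sign_approx (k : nat) (s : 'I_m -> bool) (a : 'rV[R]_m) : Prop :=
  forall j : 'I_m, ((j < k)%N -> a ord0 j = z ord0 j) /\
    ((k <= j)%N -> if s j then z ord0 j < a ord0 j else a ord0 j < z ord0 j).

(* By density, A meets the unit ball around z + (+-1)_j, whose points lie
   strictly on the side of z prescribed by s in every coordinate. *)
Lemma sign_approx0 s : exists2 a, A a & sign_approx 0 s a.
Proof.
pose x := \row_j (z ord0 j + (if s j then 1 else -1)) : 'rV[R]_m.
have [a [Aa]] := A_dense (nbhsx_ballx x 1 ltr01).
rewrite -ball_normE /= => xa; exists a => // j; split => // _.
have := le_lt_trans (entry_le_norm (x - a) j) xa.
by rewrite !mxE; case: (s j); rewrite ltr_norml => /andP[]; lra.
Qed.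

Lemma mid_gt (w a b t : R) : 0 <= t <= 1 -> w < a -> w < b -> w < t * a + (1 - t) * b.
Proof. by case/andP=> *; have [ab|ab] := leP a b; nra. Qed.

Lemma mid_lt (w a b t : R) : 0 <= t <= 1 -> a < w -> b < w -> t * a + (1 - t) * b < w.
Proof. by case/andP=> *; have [ab|ab] := leP a b; nra. Qed.

(* Induction step: combining two approximations that lie on opposite sides
   of z in coordinate k yields one that matches z in coordinate k too. *)
Lemma sign_approxS k : (k < m)%N ->
  (forall s, exists2 a, A a & sign_approx k s a) ->
  forall s, exists2 a, A a & sign_approx k.+1 s a.
Proof.
move=> km IH s; pose kk := Ordinal km.
have [ap Aap hp] := IH (fun j => (j == kk) || s j).
have [am Aam hm] := IH (fun j => (j != kk) && s j).
have := (hp kk).2 (leqnn k); have := (hm kk).2 (leqnn k); rewrite eqxx /= => hmk hpk.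
pose t := (z ord0 kk - am ord0 kk) / (ap ord0 kk - am ord0 kk).
have d0 : 0 < ap ord0 kk - am ord0 kk by lra.
have t01 : 0 <= t <= 1.
  by rewrite divr_ge0 ?ler_pdivrMr //= ?mul1r; lra.
exists (t *: ap + (1 - t) *: am); first exact: A_convex.
move=> j; rewrite !mxE; split => [jk|kj].
  have [jk'|jk'] := ltnP j k; first by rewrite (hp j).1 // (hm j).1 //; ring.
  have -> : j = kk by apply/val_inj/eqP; rewrite /= eqn_leq jk' andbT -ltnS.
  by rewrite /t; field; lra.
have jnk : j != kk by rewrite -(inj_eq val_inj) /= neq_ltn kj orbT.
have := (hp j).2 (ltnW kj); have := (hm j).2 (ltnW kj); rewrite (negbTE jnk) /=.
by case: (s j) => h1 h2; [exact: mid_gt | exact: mid_lt].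
Qed.

Lemma dense_convex_full : A z.
Proof.
have approx k : (k <= m)%N -> forall s, exists2 a, A a & sign_approx k s a.
  elim: k => [_|k IHk km]; first exact: sign_approx0.
  exact: sign_approxS km (IHk (ltnW km)).
have [a Aa ha] := approx m (leqnn m) (fun=> true).
by have -> : z = a by apply/rowP => j; rewrite (ha j).1.
Qed.

End DenseConvex.

Section PNorm.
Variables (R : realType) (k : nat) (p : \bar R).
Hypothesis p_ge1 : (1 <= p)%E.
Implicit Types (x : 'rV[R]_k).

Lemma entry_le_pnorm x i : `|x ord0 i| <= pnorm p x.
Proof.
case: p p_ge1 => [r||] //=; last by move=> _; exact: (le_bigmax _ (fun i => `|x ord0 i|) i).
rewrite lee_fin => r1; have r0 : r != 0 by rewrite gt_eqF //; lra.
rewrite -[leLHS](powRr1 (normr_ge0 _)) -[in leLHS](mulfV r0) powRrM.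
apply: ge0_ler_powR; first by rewrite invr_ge0; lra.
- by rewrite nnegrE powR_ge0.
- by rewrite nnegrE sumr_ge0 // => j _; rewrite powR_ge0.
by rewrite (bigD1 i) //= lerDl sumr_ge0 // => j _; exact: powR_ge0.
Qed.

Lemma pnorm_ge0 x : 0 <= pnorm p x.
Proof.
case: p => [r||] //=; first exact: powR_ge0.
by elim/big_ind: _ => // u v u0 _; rewrite le_max u0.
Qed.

Lemma norm_le_pnorm x : `|x| <= pnorm p x.
Proof.
rewrite (_ : `|x| = mx_norm x) // mx_normrE; apply: bigmax_le => [|[i j] _] /=.
  exact: pnorm_ge0.
by rewrite (ord1 i); exact: entry_le_pnorm.
Qed.

Lemma pnormZ x a : 0 < a -> pnorm p (a *: x) = a * pnorm p x.
Proof.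
move=> a0; case: p p_ge1 => [r||] /= p1; last by rewrite mulr0.
  have r0 : r != 0 by move: p1; rewrite lee_fin => ?; rewrite gt_eqF //; lra.
  rewrite (eq_bigr (fun i => a `^ r * `|x ord0 i| `^ r)) => [|i _]; last first.
    by rewrite mxE normrM (gtr0_norm a0) powRM // ltW.
  have s0 : 0 <= \sum_(i < k) `|x ord0 i| `^ r by apply: sumr_ge0 => i _; exact: powR_ge0.
  rewrite -mulr_sumr powRM ?powR_ge0 //.
  by rewrite -powRrM mulfV // powRr1 // ltW.
elim/big_ind2: _ => [|u v u' v' -> ->|i _]; first by rewrite mulr0.
  by rewrite maxr_pMr // ltW.
by rewrite mxE normrM (gtr0_norm a0).
Qed.

End PNorm.

Section InteriorPoint.
Variables (R : realType) (m : nat) (C : set 'rV[R]_m) (c : 'rV[R]_m).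
Hypotheses (C_cone : is_cone C) (C_conv : is_convex_set C).

Lemma interior_ball : interior C c ->
  exists2 r : R, 0 < r & forall v, `|v| < r -> C (c + v).
Proof.
move=> /nbhs_ballP [r r0 H]; exists r => // v hv; apply: H.
by rewrite -ball_normE /= opprD addrA subrr sub0r normrN.
Qed.

(* c + cl C lies in C: approximate d by d' in C and absorb d - d' into the
   ball around c. *)
Lemma interior_add_closure : interior C c -> forall d, closure C d -> C (c + d).
Proof.
move=> /interior_ball [r r0 H] d /(_ _ (nbhsx_ballx d r r0)) [d' [Cd' dd']].
rewrite -[d](subrK d') addrA; apply: cone_add => //; apply: H.
by move: dd'; rewrite -ball_normE.
Qed.

(* The convex hull of a finite set P lies in q + C for some q: shifting
   down along the interior direction c by a large multiple puts every
   point of P into C. *)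
Lemma conv_finite_shift : interior C c ->
  forall P, finite_set P -> exists q, forall v, Defs.conv P v -> C (v - q).
Proof.
move=> ic P fP; have [r r0 H] := interior_ball ic.
have [M [_ HM]] := compact_bounded (finite_compact fP).
pose M' := `|M| + 1.
have M'0 : 0 < M' by rewrite /M'; have := normr_ge0 M; lra.
have PM v : P v -> `|v| <= M'.
  by move=> Pv; apply: (HM M') => //; rewrite /M'; have := ler_norm M; lra.
pose T := M' / r + 1.
have T0 : 0 < T by rewrite /T; have := divr_gt0 M'0 r0; lra.
have CP v : P v -> C (v + T *: c).
  move=> Pv; rewrite -[v](scalerKV (lt0r_neq0 T0)) -scalerDr addrC.
  apply: C_cone; last exact: ltW.
  apply: H; rewrite normrZ gtr0_norm ?invr_gt0 // ltr_pdivrMl //.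
  by apply: le_lt_trans (PM v Pv) _; rewrite /T mulrDl divfK ?gt_eqF //; lra.
exists (- (T *: c)) => _ [N [w [a [w0 w1 Pa ->]]]].
have -> : \sum_(i < N) w i *: a i - - (T *: c) = \sum_(i < N) w i *: (a i + T *: c).
  under [RHS]eq_bigr do rewrite scalerDr.
  by rewrite opprK big_split /= -scaler_suml w1 scale1r.
apply: cone_sum => //; first by exists c; have := H 0; rewrite addr0 normr0; apply.
by move=> i; apply: CP.
Qed.

Section Radii.
Variable p : \bar R.
Hypothesis p_ge1 : (1 <= p)%E.

Definition inner_radii : set R :=
  [set d : R | 0 < d /\ Defs.msum [set c] (Bball p d) `<=` C].

Lemma inner_radii_ex : interior C c -> exists2 d, 0 < d & inner_radii d.
Proof.
move=> /interior_ball [r r0 H]; exists (r / 2); first lra.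
split; first lra.
move=> _ [_ -> [b Bb <-]]; apply: H.
by apply: le_lt_trans (le_trans (norm_le_pnorm p_ge1 b) Bb) _; lra.
Qed.

(* If every radius were admissible, C would be the whole space. *)
Lemma inner_radii_bounded : C != setT -> has_ubound inner_radii.
Proof.
move=> /eqP CT; apply: contrapT => nub; apply: CT; apply/seteqP; split => // y _.
have [d [_ Cd] dy] : exists2 d, inner_radii d & pnorm p (y - c) < d.
  apply: contrapT => hn; apply: nub; exists (pnorm p (y - c)) => d Sd.
  by rewrite leNgt; apply/negP => dy; apply: hn; exists d.
apply: Cd; exists c => //; exists (y - c); last by rewrite addrC subrK.
exact: ltW.
Qed.

Lemma delta_c_witness : C != setT -> interior C c ->
  forall eps eps' : R, 0 < eps -> eps / delta_c p C c < eps' ->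
  exists2 d, inner_radii d & eps < eps' * d.
Proof.
move=> CT ic eps eps' e0 hlt.
have [d0 d0_gt0 Sd0] := inner_radii_ex ic.
have hs : has_sup inner_radii by split; [exists d0 | exact: inner_radii_bounded].
have Dp : 0 < delta_c p C c by apply: lt_le_trans d0_gt0 (sup_upper_bound hs Sd0).
have e'0 : 0 < eps' by apply: lt_trans hlt; exact: divr_gt0.
have hm : 0 < delta_c p C c - eps / eps'.
  by rewrite subr_gt0 ltr_pdivrMr // mulrC -ltr_pdivrMr.
have [d Sd hd] := sup_adherent hm hs.
exists d => //; rewrite mulrC -ltr_pdivrMr //.
by move: hd; rewrite /delta_c opprB addrC subrK.
Qed.

Lemma cone_absorb d r s1 s2 b u : inner_radii d ->
  (forall v, `|v| < r -> C (c + v)) -> 0 < s1 -> 0 < s2 ->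
  pnorm p b <= s1 * d -> `|u| < s2 * r -> C (b + u + (s1 + s2) *: c).
Proof.
move=> [_ Cd] Cr s1_gt0 s2_gt0 bd ur.
have -> : b + u + (s1 + s2) *: c = s1 *: (c + s1^-1 *: b) + s2 *: (c + s2^-1 *: u).
  by apply/rowP => j; rewrite !mxE; field; rewrite (gt_eqF s1_gt0) (gt_eqF s2_gt0).
apply: cone_add => //; apply: C_cone; rewrite ?ltW //.
  apply: Cd; exists c => //; exists (s1^-1 *: b) => //.
  by rewrite /Bball /= pnormZ ?invr_gt0 // ler_pdivrMl.
by apply: Cr; rewrite normrZ gtr0_norm ?invr_gt0 // ltr_pdivrMl.
Qed.

End Radii.
End InteriorPoint.

Section ConvexProjection.
Variables (R : realType) (n m : nat) (C : set 'rV[R]_m) (X : set 'rV[R]_n)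
  (Gam : 'rV[R]_n -> 'rV[R]_m).
Hypotheses (C_cone : is_cone C) (C_conv : is_convex_set C).

Lemma Ya_msum : Ya C X Gam = Defs.msum (Gam @` X) C.
Proof.
rewrite /Ya /Sa /Defs.msum; apply/seteqP; split => y.
  case=> -[x y'] /= [Xx [a -> [b Cb <-]]] <-.
  by exists (Gam x); [exists x | exists b].
move=> [_ [x Xx <-] [b Cb <-]]; exists (x, Gam x + b) => //; split => //=.
by exists (Gam x) => //; exists b.
Qed.

Lemma upper_image_Ya : upper_image C X Gam = closure (Ya C X Gam).
Proof. by rewrite Ya_msum. Qed.

Lemma Ya_convex : is_convex_set X -> C_convex C X Gam -> is_convex_set (Ya C X Gam).
Proof.
move=> hX hG; rewrite Ya_msum.
move=> _ _ [_ [x1 X1 <-] [c1 C1 <-]] [_ [x2 X2 <-] [c2 C2 <-]] t t01.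
set x := t *: x1 + (1 - t) *: x2.
exists (Gam x); first by exists x; [exact: hX|].
exists ((t *: Gam x1 + (1 - t) *: Gam x2 - Gam x) + (t *: c1 + (1 - t) *: c2)).
  by apply: cone_add => //; [exact: hG | exact: C_conv].
by apply/rowP => j; rewrite !mxE; ring.
Qed.

Lemma cone_sub_recc : C `<=` recc (upper_image C X Gam).
Proof.
move=> c0 Cc0 x Gx l l0.
have shift : (fun z => 1 *: z + l *: c0) @` Defs.msum (Gam @` X) C `<=`
             Defs.msum (Gam @` X) C.
  move=> _ [_ [a Ga [b Cb <-]] <-]; exists a => //; exists (b + l *: c0).
    by apply: cone_add => //; exact: C_cone.
  by rewrite scale1r addrA.
by have /= := closure_map (affine_continuous (a := 1) (b := l *: c0)) shift Gx; rewrite scale1r.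
Qed.

Lemma proj_sub_X Sb : Sb `<=` Sa C X Gam -> fst @` Sb `<=` X.
Proof. by move=> SbS _ [xy Sxy <-]; exact: (SbS _ Sxy).1. Qed.

Lemma snd_sub_msum Sb : Sb `<=` Sa C X Gam ->
  snd @` Sb `<=` Defs.msum (Gam @` (fst @` Sb)) C.
Proof.
move=> SbS _ [xy Sxy <-]; have [_ [a -> [b Cb <-]]] := SbS _ Sxy.
by exists (Gam xy.1); [exists xy.1 => //; exists xy | exists b].
Qed.

Lemma solution_infimizer Sb : is_convex_set X -> C_convex C X Gam ->
  pv_solution C X Gam Sb -> infimizer C X Gam (fst @` Sb).
Proof.
move=> hX hG [SbS hY]; split; first exact: proj_sub_X.
rewrite upper_image_Ya; apply/seteqP; split => [y /(closureS hY)|].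
  by rewrite closure_closure; apply/closureS/conv_mono/snd_sub_msum.
apply: closureS => v hv; apply: (conv_sub_convex (Ya_convex hX hG)).
apply: conv_mono hv; rewrite Ya_msum => _ [_ [x Sx <-] [b Cb <-]].
by exists (Gam x); [exists x => //; exact: proj_sub_X Sx | exists b].
Qed.

(* Part (2), first half: a dense convex set is everything, so the upper
   image is proper as soon as Y_a is. *)
Lemma upper_image_proper : is_convex_set X -> C_convex C X Gam ->
  Ya C X Gam != setT -> upper_image C X Gam != setT.
Proof.
move=> hX hG /eqP YT; apply/eqP => GT; apply: YT; apply/seteqP; split => // z _.
by apply: (dense_convex_full _ (Ya_convex hX hG)) => y; rewrite -upper_image_Ya GT.
Qed.

(* Part (2), second half: the finitely many points generating Y_a are
   dominated by a single point q, so G <= q + recc G. *)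
Lemma pv_self_bounded_shift c : interior C c -> pv_self_bounded C X Gam ->
  exists q, upper_image C X Gam `<=` Defs.msum [set q] (recc (upper_image C X Gam)).
Proof.
move=> ic [_ [P [fP hP]]]; have [q hq] := conv_finite_shift C_cone C_conv ic fP.
have Gcl : closed (upper_image C X Gam) by rewrite upper_image_Ya; exact: closed_closure.
have shift : (fun y => 1 *: y + - q) @` Ya C X Gam `<=` recc (upper_image C X Gam).
  move=> _ [y /hP [v cv [w rw <-]] <-] /=; rewrite scale1r addrAC.
  by apply: recc_add; [exact: cone_sub_recc (hq _ cv) | rewrite upper_image_Ya].
exists q => y Gy; exists q => //; exists (y - q); last by rewrite addrC subrK.
apply: recc_closed Gcl _ _; rewrite upper_image_Ya in Gy.
by have /= := closure_map (affine_continuous (a := 1) (b := - q)) shift Gy; rewrite scale1r.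
Qed.

(* Part (2), bounded case: recc G = cl C, and c + cl C <= C. *)
Lemma pv_self_bounded_bounded c : interior C c -> pv_self_bounded C X Gam ->
  recc (closure (Ya C X Gam)) = closure C -> cvop_bounded C X Gam.
Proof.
move=> ic hs hrec; have [q hq] := pv_self_bounded_shift ic hs.
exists (q - c) => y /hq [_ -> [r rr <-]]; exists (q - c) => //; exists (c + r).
  by apply: interior_add_closure; rewrite // -hrec -upper_image_Ya.
by rewrite addrA subrK.
Qed.

(* Part (3): approximate y in G by y' in Y_a within (eps' - eps/d) r and
   absorb both the eps-ball error and y - y' into eps' c. *)
Lemma eps_solution_infimizer p c eps eps' Sb : (1 <= p)%E -> C != setT ->
  interior C c -> 0 < eps -> pv_finite_eps_solution C X Gam p eps Sb ->
  eps / delta_c p C c < eps' -> finite_eps_infimizer C X Gam c eps' (fst @` Sb).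
Proof.
move=> p1 CT ic e0 [SbS [xy Sxy] fSb hY] he.
have [d Sd ed] := delta_c_witness p1 CT ic e0 he.
have [r r0 Cr] := interior_ball ic.
pose s1 := eps / d; pose s2 := eps' - s1.
have s1_gt0 : 0 < s1 by rewrite divr_gt0 //; case: Sd.
have s2_gt0 : 0 < s2 by rewrite subr_gt0 ltr_pdivrMr //; case: Sd.
split; [exact: proj_sub_X | by exists xy.1; exists xy | exact: finite_image |].
move=> y; rewrite {1}upper_image_Ya => /(_ _ (nbhsx_ballx y (s2 * r) (mulr_gt0 s2_gt0 r0))).
move=> [_ [/hY [_ [v cv [w rw <-]] [b Bb <-]]]]; rewrite -ball_normE /= => yy'.
have Cn : C !=set0 by exists c; exact: nbhs_singleton.
have [g cg [c0 Cc0 vE]] := conv_msum_cone C_cone C_conv Cn (conv_mono (snd_sub_msum SbS) cv).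
have Ce : C (b + (y - (v + w + b)) + eps' *: c).
  have bd : pnorm p b <= s1 * d by rewrite /s1 divfK //; case: Sd => /gt_eqF ->.
  have -> : eps' = s1 + s2 by rewrite /s2 subrKC.
  exact (cone_absorb C_cone C_conv p1 Sd Cr s1_gt0 s2_gt0 bd yy').
exists (g + (c0 + w + (b + (y - (v + w + b)) + eps' *: c))).
  exists g => //; exists (c0 + w + (b + (y - (v + w + b)) + eps' *: c)) => //.
  apply: recc_add; last exact: cone_sub_recc.
  by apply: recc_add; [exact: cone_sub_recc | rewrite upper_image_Ya].
exists (- (eps' *: c)) => //.
by rewrite -vE; apply/rowP => j; rewrite !mxE; ring.
Qed.

End ConvexProjection.

Theorem mainTheorem12 (R : realType) (n m : nat) (p : \bar R)
  (C : set 'rV[R]_m) (X : set 'rV[R]_n) (Gam : 'rV[R]_n -> 'rV[R]_m)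
  (c : 'rV[R]_m) (eps : R) :
  (1 <= p)%E ->
  ntps_convex_cone C ->
  is_convex_set X ->
  C_convex C X Gam ->
  interior C c -> pnorm p c = 1 -> 0 < eps ->
  (* (1) *)
  (forall Sb, pv_solution C X Gam Sb -> infimizer C X Gam (fst @` Sb)) /\
  (* (2) *)
  (pv_self_bounded C X Gam -> cvop_self_bounded C X Gam) /\
  (pv_self_bounded C X Gam -> recc (closure (Ya C X Gam)) = closure C ->
     cvop_bounded C X Gam) /\
  (* (3) *)
  (pv_self_bounded C X Gam ->
   forall Sb, pv_finite_eps_solution C X Gam p eps Sb ->
   forall eps' : R, eps / delta_c p C c < eps' ->
     finite_eps_infimizer C X Gam c eps' (fst @` Sb)).
Proof.
move=> p1 [C_cone C_conv [_ CT] _ _] hX hG ic _ e0.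
split; [|split; [|split]].
- by move=> Sb; apply: solution_infimizer.
- move=> hs; split; last exact: pv_self_bounded_shift ic hs.
  by apply: upper_image_proper => //; case: hs.
- exact: pv_self_bounded_bounded ic.
- by move=> _ Sb hSb eps'; apply: eps_solution_infimizer.
Qed.
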